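(* For any $0\le\epsilon<1$ and any integer $m>1$, $$\rho\Big((1-\epsilon)|\Psi\rangle\langle\Psi|+\epsilon\,\frac{\mathrm{id}_m}{m}\otimes\frac{\mathrm{id}_m}{m}\Big)=1-\epsilon,$$ where $|\Psi\rangle=\frac1{\sqrt m}\sum_{i=0}^{m-1}|i,i\rangle$ is the $m$-dimensional maximally entangled state.
   Context: For a bipartite state $\psi_{AB}$ on $\mathbb{C}^{m}\otimes\mathbb{C}^{m}$ with $\psi_A=\psi_B=\mathrm{id}_m/m$, its maximal correlation is $\rho(\psi_{AB})=\sup\{|\mathrm{Tr}((P^\dagger\otimes Q)\psi_{AB})|: P,Q\in\mathcal{M}_m,\ \mathrm{Tr}P=\mathrm{Tr}Q=0,\ \tfrac1m\mathrm{Tr}P^\dagger P=\tfrac1m\mathrm{Tr}Q^\dagger Q=1\}$, where $\mathcal{M}_m$ is the space of complex $m\times m$ matrices. *)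

From HB Require Import structures.
From mathcomp Require Import all_boot all_order all_algebra.
From mathcomp Require Import classical_sets reals.
From mathcomp Require Import complex mxtens.
Set Implicit Arguments. Unset Strict Implicit. Unset Printing Implicit Defensive.
Import Order.TTheory GRing.Theory Num.Theory.
Local Open Scope ring_scope.
Local Open Scope classical_set_scope.

Definition dagger (R : realType) (p q : nat) (P : 'M[R[i]]_(p, q)) : 'M[R[i]]_(q, p) :=
  (map_mx (@conjc R) P)^T.

(* Maximal correlation of a bipartite state psi on C^m (x) C^m, encoded as an
   (m*m) x (m*m) matrix; the basis vector |i,j> has index mxtens_index (i,j),
   consistent with the Kronecker product A *t B. *)
Definition maxcorr (R : realType) (m : nat) (psi : 'M[R[i]]_(m * m)) : R :=
  sup [set r : R | exists P Q : 'M[R[i]]_m,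
         [/\ \tr P = 0, \tr Q = 0,
             (m%:R)^-1 * \tr (dagger P *m P) = 1,
             (m%:R)^-1 * \tr (dagger Q *m Q) = 1 &
             r = ComplexField.Normc.normc (\tr ((dagger P *t Q) *m psi))]].

Definition maxent_ket (R : realType) (m : nat) : 'cV[R[i]]_(m * m) :=
  \col_k (if (mxtens_unindex k).1 == (mxtens_unindex k).2
          then (((Num.sqrt (m%:R : R))^-1)%:C)%C else 0).

Definition isotropic_state (R : realType) (m : nat) (eps : R) : 'M[R[i]]_(m * m) :=
  ((1 - eps)%:C)%C *: (maxent_ket R m *m dagger (maxent_ket R m))
  + (eps%:C)%C *: (((m%:R)^-1 *: (1%:M : 'M[R[i]]_m)) *t ((m%:R)^-1 *: (1%:M : 'M[R[i]]_m))).
Arguments maxent_ket : clear implicits.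
Arguments isotropic_state : clear implicits.

(* For traceless Q the white-noise part of the state contributes
   tr(P^dagger) tr(Q) / m^2 = 0, while <Psi| A (x) B |Psi> = tr(A B^T) / m.
   Hence the correlation of (P, Q) is (1 - eps) |tr(P^dagger Q^T)| / m, which
   the Cauchy-Schwarz inequality for the Hilbert-Schmidt inner product bounds
   by 1 - eps under the normalisation tr(P^dagger P) = tr(Q^dagger Q) = m.
   Equality holds for Q = P^T, and since m > 1 a traceless normalised P exists:
   sqrt m times an off-diagonal matrix unit. *)

From HB Require Import structures.
From mathcomp Require Import all_boot all_order all_algebra.
From mathcomp Require Import classical_sets reals.
From mathcomp Require Import complex mxtens.
Set Implicit Arguments.
Unset Strict Implicit.
Unset Printing Implicit Defensive.
Import Order.TTheory GRing.Theory Num.Theory.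
Local Open Scope ring_scope.

Lemma sup_eq_max (R : realType) (E : set R) (x : R) :
  E x -> ubound E x -> sup E = x.
Proof.
move=> Ex ubx; apply/le_anti/andP; split; first by apply: ge_sup => //; exists x.
by apply: ub_le_sup => //; exists x.
Qed.

Lemma big_mxtens_index (V : nmodType) m n (F : 'I_(m * n) -> V) :
  \sum_(k < m * n) F k = \sum_(i < m) \sum_(j < n) F (mxtens_index (i, j)).
Proof.
rewrite pair_big /= (reindex (@mxtens_index m n)) //=; last first.
  by exists (@mxtens_unindex m n) => k _; rewrite ?mxtens_indexK ?mxtens_unindexK.
by apply: eq_bigr => -[i j].
Qed.

Lemma sum_mxtens_diag (V : nmodType) n (F : 'I_(n * n) -> V) (G : 'I_n -> V) :
  (forall i j, F (mxtens_index (i, j)) = if i == j then G i else 0) ->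
  \sum_k F k = \sum_i G i.
Proof.
move=> FE; rewrite big_mxtens_index; apply: eq_bigr => i _.
under eq_bigr do rewrite FE.
by rewrite -big_mkcond (big_pred1 i).
Qed.

Lemma mxtrace_tens (R : comPzRingType) m n (A : 'M[R]_m) (B : 'M[R]_n) :
  \tr (A *t B) = \tr A * \tr B.
Proof. by rewrite mulr_sum; apply: eq_bigr => k _; rewrite mxE. Qed.

Lemma mxtrace_delta (R : pzSemiRingType) n (i j : 'I_n) :
  \tr (delta_mx i j : 'M[R]_n) = (i == j)%:R.
Proof.
rewrite /mxtrace (bigD1 i) //= mxE eqxx big1 ?addr0 // => k /negbTE ki.
by rewrite mxE ki.
Qed.

Section ComplexMatrices.
Variable R : realType.
Local Notation C := R[i].

Lemma normc_normr (z : C) : (ComplexField.Normc.normc z)%:C%C = `|z|.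
Proof. by case: z. Qed.

Lemma mxtrace_dagger_mul p q (A B : 'M[C]_(p, q)) :
  \tr (dagger A *m B) = \sum_i \sum_j (A i j)^*%C * B i j.
Proof.
rewrite exchange_big; apply: eq_bigr => j _; rewrite mxE.
by apply: eq_bigr => i _; rewrite !mxE.
Qed.

Lemma mxtrace_dagger_mul_self p q (A : 'M[C]_(p, q)) :
  \tr (dagger A *m A) = \sum_i \sum_j `|A i j| ^+ 2.
Proof.
rewrite mxtrace_dagger_mul; apply: eq_bigr => i _; apply: eq_bigr => j _.
by rewrite sqr_normc mulrC.
Qed.

Lemma mxtrace_dagger_trmx p q (A : 'M[C]_(p, q)) :
  \tr (dagger A^T *m A^T) = \tr (dagger A *m A).
Proof.
rewrite !mxtrace_dagger_mul_self exchange_big.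
by apply: eq_bigr => i _; apply: eq_bigr => j _; rewrite mxE.
Qed.

Lemma normr_mxtrace_dagger_mul_le p q (A B : 'M[C]_(p, q)) :
  `|\tr (dagger A *m B)| *+ 2 <= \tr (dagger A *m A) + \tr (dagger B *m B).
Proof.
rewrite mxtrace_dagger_mul !mxtrace_dagger_mul_self -big_split /=.
apply: le_trans (_ : (\sum_i \sum_j `|A i j| * `|B i j|) *+ 2 <= _).
  rewrite lerMn2r /=; apply: le_trans (ler_norm_sum _ _ _) _.
  apply: ler_sum => i _; apply: le_trans (ler_norm_sum _ _ _) _.
  by apply: ler_sum => j _; rewrite normrM normcJ.
rewrite -sumrMnl; apply: ler_sum => i _; rewrite -sumrMnl -big_split /=.
apply: ler_sum => j _.
exact: (real_leif_mean_square_scaled (normr_real _) (normr_real _)).1.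
Qed.

Lemma dagger_scale_delta n (a : C) (i j : 'I_n) :
  dagger (a *: delta_mx i j) = a^*%C *: delta_mx j i.
Proof. by rewrite /dagger map_mxZ map_delta_mx linearZ /= trmx_delta. Qed.

Lemma mxtrace_mul_proj n (M : 'M[C]_n) (u : 'cV[C]_n) :
  \tr (M *m (u *m dagger u)) = \sum_x (u x 0)^*%C * (M *m u) x 0.
Proof.
rewrite mulmxA mxtrace_mulC /mxtrace big_ord1 mxE.
by apply: eq_bigr => x _; rewrite !mxE.
Qed.

End ComplexMatrices.

Section IsotropicState.
Variables (R : realType) (m : nat).
Local Notation C := R[i].
Local Notation Psi := (maxent_ket R m).
Local Notation c := ((Num.sqrt (m%:R : R))^-1)%:C%C.

Lemma maxent_ketE (i j : 'I_m) :
  Psi (mxtens_index (i, j)) 0 = if i == j then c else 0.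
Proof. by rewrite mxE mxtens_indexK. Qed.

Lemma maxent_coef_normE : c^*%C * c = m%:R^-1.
Proof.
rewrite conjc_real -rmorphM -expr2 exprVn sqr_sqrtr ?ler0n //.
by rewrite fmorphV rmorph_nat.
Qed.

Lemma tens_mul_maxentE (A B : 'M[C]_m) (i j : 'I_m) :
  ((A *t B) *m Psi) (mxtens_index (i, j)) 0 = c * (A *m B^T) i j.
Proof.
rewrite mxE (@sum_mxtens_diag _ _ _ (fun k => A i k * B j k * c)) => [|k l].
  by rewrite mxE mulr_sumr; apply: eq_bigr => k _; rewrite mxE mulrC.
by rewrite tensmxE maxent_ketE; case: eqP => [<-|_]; rewrite ?mulr0.
Qed.

Lemma mxtrace_tens_maxent (A B : 'M[C]_m) :
  \tr ((A *t B) *m (Psi *m dagger Psi)) = m%:R^-1 * \tr (A *m B^T).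
Proof.
rewrite mxtrace_mul_proj (@sum_mxtens_diag _ _ _ (fun i => c^*%C * c * (A *m B^T) i i)).
  by rewrite maxent_coef_normE mulr_sumr.
move=> i j; rewrite maxent_ketE tens_mul_maxentE.
by case: eqP => [<-|_]; rewrite ?conjc0 ?mul0r ?mulrA.
Qed.

Lemma mxtrace_tens_isotropic eps (A B : 'M[C]_m) :
  \tr ((A *t B) *m isotropic_state R m eps) =
  (1 - eps)%:C%C * (m%:R^-1 * \tr (A *m B^T))
  + eps%:C%C * (m%:R^-1 * \tr A * (m%:R^-1 * \tr B)).
Proof.
rewrite /isotropic_state mulmxDr -!scalemxAr mxtraceD !mxtraceZ.
by rewrite mxtrace_tens_maxent tensmx_mul mxtrace_tens !scalemx1 !mul_mx_scalar !mxtraceZ.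
Qed.

Lemma isotropic_correlation_le eps (P Q : 'M[C]_m) :
  eps <= 1 -> \tr Q = 0 ->
  m%:R^-1 * \tr (dagger P *m P) = 1 -> m%:R^-1 * \tr (dagger Q *m Q) = 1 ->
  ComplexField.Normc.normc (\tr ((dagger P *t Q) *m isotropic_state R m eps))
    <= 1 - eps.
Proof.
move=> eps_le1 trQ normP normQ.
have cauchy_schwarz := normr_mxtrace_dagger_mul_le P Q^T.
rewrite mxtrace_dagger_trmx in cauchy_schwarz.
rewrite -lecR normc_normr mxtrace_tens_isotropic trQ !mulr0 addr0 normrM.
rewrite ger0_norm ?ler0c ?subr_ge0 // -[X in _ <= X]mulr1 ler_wpM2l ?ler0c ?subr_ge0 //.
rewrite -(ler_pMn2r (_ : 0 < 2)%N) // normrM ger0_norm ?invr_ge0 ?ler0n // -mulrnAr.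
apply: le_trans (ler_wpM2l _ cauchy_schwarz) _; first by rewrite invr_ge0 ler0n.
by rewrite mulrDr normP normQ mulr2n.
Qed.

Lemma isotropic_correlation_trmx eps (P : 'M[C]_m) :
  eps <= 1 -> \tr P = 0 -> m%:R^-1 * \tr (dagger P *m P) = 1 ->
  ComplexField.Normc.normc (\tr ((dagger P *t P^T) *m isotropic_state R m eps))
    = 1 - eps.
Proof.
move=> eps_le1 trP normP.
rewrite mxtrace_tens_isotropic [\tr P^T]mxtrace_tr trP !mulr0 addr0 trmxK normP mulr1.
by apply: complexI; rewrite normc_normr ger0_norm // ler0c subr_ge0.
Qed.

Lemma exists_traceless_normalized :
  (1 < m)%N -> exists P : 'M[C]_m, \tr P = 0 /\ m%:R^-1 * \tr (dagger P *m P) = 1.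
Proof.
move=> m_gt1; have m_gt0 : (0 < m)%N := ltnW m_gt1.
pose s := (Num.sqrt (m%:R : R))%:C%C.
exists (s *: delta_mx (Ordinal m_gt0) (Ordinal m_gt1)); split.
  by rewrite mxtraceZ mxtrace_delta mulr0.
rewrite dagger_scale_delta -scalemxAl -scalemxAr !mxtraceZ mul_delta_mx mxtrace_delta.
rewrite eqxx mulr1 conjc_real -rmorphM -expr2 sqr_sqrtr ?ler0n // rmorph_nat.
by rewrite mulVf // pnatr_eq0 -lt0n.
Qed.

End IsotropicState.

Theorem lemma3p9 (R : realType) (m : nat) (eps : R) :
  0 <= eps -> eps < 1 -> (1 < m)%N ->
  maxcorr (isotropic_state R m eps) = 1 - eps.
Proof.
move=> _ /ltW eps_le1 m_gt1; apply: sup_eq_max.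
  have [P [trP normP]] := exists_traceless_normalized R m_gt1.
  exists P, P^T; split; rewrite ?mxtrace_tr ?mxtrace_dagger_trmx //.
  by rewrite isotropic_correlation_trmx.
by move=> _ [P [Q [_ trQ normP normQ ->]]]; apply: isotropic_correlation_le.
Qed.
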